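(* Let $(\mathcal T(n))_{n\in\mathbb N}$ be the triangle Markov chain obtained by iterated random barycentric subdivision, $J_n=J(\mathcal T(n))$, and $\mathcal T_n$ the $\sigma$-algebra generated by $\mathcal T(0),\dots,\mathcal T(n)$. Then for every $n\in\mathbb N$, $$\mathbb E[J_{n+1}\mid\mathcal T_n]=\frac43 J_n .$$
   Context: A triangle is given by three points of the plane which are not all equal. Barycentric subdivision: if a triangle has vertices $A,B,C$, let $D,E,F$ be the midpoints of $[A,B],[B,C],[C,A]$ and $G$ its barycenter; the medians cut it into the six triangles $\{A,D,G\},\{D,B,G\},\{B,E,G\},\{E,C,G\},\{C,F,G\},\{F,A,G\}$. The triangle Markov chain: $\mathcal T(0)$ is given and $\mathcal T(n+1)$ is chosen uniformly among the six triangles of the barycentric subdivision of $\mathcal T(n)$, independently of the past. For a triangle $\mathcal T$, $J(\mathcal T)\in(0,+\infty]$ is the sum of the squares of the lengths of its edges divided by its area ($J=+\infty$ for flat, i.e. zero-area, triangles). *)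

From HB Require Import structures.
From mathcomp Require Import all_boot all_order all_algebra.
From mathcomp Require Import reals constructive_ereal.
Set Implicit Arguments. Unset Strict Implicit. Unset Printing Implicit Defensive.
Import Order.TTheory GRing.Theory Num.Theory.
Local Open Scope ring_scope.

Section Triangles.
Variable R : realType.

Definition point := (R * R)%type.
Definition triangle := (point * point * point)%type.

Definition midpoint (p q : point) : point :=
  ((p.1 + q.1) / 2, (p.2 + q.2) / 2).
Definition barycenter (a b c : point) : point :=
  ((a.1 + b.1 + c.1) / 3, (a.2 + b.2 + c.2) / 3).
Definition sqdist (p q : point) : R := (p.1 - q.1) ^+ 2 + (p.2 - q.2) ^+ 2.

Definition not_all_equal (t : triangle) : bool :=
  let: (a, b, c) := t in ~~ ((a == b) && (b == c)).

Definition area (t : triangle) : R :=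
  let: (a, b, c) := t in
  `|(b.1 - a.1) * (c.2 - a.2) - (b.2 - a.2) * (c.1 - a.1)| / 2.

Definition J (t : triangle) : \bar R :=
  let: (a, b, c) := t in
  if area t == 0 then +oo%E
  else ((sqdist a b + sqdist b c + sqdist c a) / area t)%:E.

Definition subdiv (t : triangle) : seq triangle :=
  let: (A, B, C) := t in
  let D := midpoint A B in let E := midpoint B C in let F := midpoint C A in
  let G := barycenter A B C in
  [:: (A, D, G); (D, B, G); (B, E, G); (E, C, G); (C, F, G); (F, A, G)].

Definition child (k : 'I_6) (t : triangle) : triangle := nth t (subdiv t) k.

(* the chain driven by the choices w 0, w 1, ..., w (N-1) in 'I_6:
   T(0) = T0, T(m+1) = child (w m) (T(m)) for m < N. *)
Fixpoint chain (T0 : triangle) (N : nat) (w : {ffun 'I_N -> 'I_6}) (m : nat)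
  : triangle :=
  match m with
  | 0 => T0
  | m'.+1 => let t := chain T0 w m' in
             oapp (fun i : 'I_N => child (w i) t) t (insub m')
  end.

End Triangles.

(* Elementary conditional expectation on a finite sample space with the
   uniform probability, w.r.t. the sigma-algebra generated by Y : Omega -> V
   (its atoms are the level sets of Y, all of positive probability). *)
Definition condexp (R : realType) (Omega : finType) (V : eqType)
  (X : Omega -> \bar R) (Y : Omega -> V) (w : Omega) : \bar R :=
  ((#|[set w' | Y w' == Y w]|%:R)^-1 : R)%:E *
  (\sum_(w' | Y w' == Y w) X w')%E.

From HB Require Import structures.
From mathcomp Require Import all_boot all_order all_algebra.
From mathcomp Require Import reals constructive_ereal.
From mathcomp Require Import ring zify.
Set Implicit Arguments. Unset Strict Implicit. Unset Printing Implicit Defensive.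
Import Order.TTheory GRing.Theory Num.Theory.
Local Open Scope ring_scope.

(* Every child has a sixth of the area of its parent, while the squared edge
   lengths of the six children add up to 4/3 of those of the parent; hence
   J summed over the children is 8 J.  Conditioning on T(0), ..., T(n) fixes
   T(n) and leaves the last choice uniform on 'I_6, because every level set
   of the past is invariant under translating the last choice in Z/6Z.
   Both sides are +oo when T(n) is flat, so T(0) may even be degenerate. *)

Section CoordinateShift.
Variables (I : finType) (G : finZmodType) (i0 : I).

Definition shift_at (g : G) (w : {ffun I -> G}) : {ffun I -> G} :=
  [ffun i => if i == i0 then w i + g else w i].

Lemma shift_atK (g : G) : cancel (shift_at g) (shift_at (- g)).
Proof. by move=> w; apply/ffunP => i; rewrite !ffunE; case: eqP; rewrite ?addrK. Qed.

Lemma shift_at_bij (g : G) : bijective (shift_at g).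
Proof.
exists (shift_at (- g)); first exact: shift_atK.
by move=> w; have := shift_atK (- g) w; rewrite opprK.
Qed.

Lemma sum_shift_invariant (V : nmodType) (P : pred {ffun I -> G}) (h : G -> V) :
  (forall g w, P (shift_at g w) = P w) ->
  (\sum_(w | P w) h (w i0)) *+ #|G| = (\sum_g h g) *+ #|P|.
Proof.
move=> P_shift.
have shift_sum g : \sum_(w | P w) h (w i0) = \sum_(w | P w) h (w i0 + g).
  rewrite (reindex (shift_at g)); last exact/onW_bij/shift_at_bij.
  by apply: eq_big => [w|w _]; rewrite ?P_shift // ffunE eqxx.
rewrite -sumr_const (eq_bigr _ (fun g _ => shift_sum g)) exchange_big /=.
rewrite -(sumr_const P); apply: eq_bigr => w _.
by rewrite [RHS](reindex_inj (addrI (w i0))); apply: eq_bigl.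
Qed.

End CoordinateShift.

Lemma natmul_enatmul (R : numDomainType) (x : \bar R) n : x *+ n = (x *+ n)%E.
Proof. by []. Qed.

Section Subdivision.
Variable R : realType.
Implicit Types (t : triangle R) (k : 'I_6).

Definition sum_sqdist t : R :=
  let: (a, b, c) := t in sqdist a b + sqdist b c + sqdist c a.

Lemma J_sum_sqdist t :
  J t = if area t == 0 then +oo%E else (sum_sqdist t / area t)%:E.
Proof. by case: t => [[a b] c]. Qed.

Lemma area_child k t : area (child k t) = area t / 6.
Proof.
have norm_div6 (x : R) : `|x / 6| / 2 = `|x| / 2 / 6.
  by rewrite normrM (ger0_norm (_ : 0 <= 6^-1)) ?invr_ge0 // mulrAC.
case: t => [[[a1 a2] [b1 b2]] [c1 c2]].
case: k => [[|[|[|[|[|[|//]]]]]] k_lt];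
  rewrite /child /subdiv /area /midpoint /barycenter /= -norm_div6;
  by congr (`|_| / 2); field.
Qed.

Lemma sum_sqdist_child t : \sum_k sum_sqdist (child k t) = 4 / 3 * sum_sqdist t.
Proof.
case: t => [[[a1 a2] [b1 b2]] [c1 c2]].
rewrite !big_ord_recr big_ord0 /child /subdiv /sum_sqdist /sqdist.
by rewrite /midpoint /barycenter /=; field.
Qed.

Lemma sum_J_child t : (\sum_k J (child k t) = 8%:E * J t)%E.
Proof.
rewrite J_sum_sqdist; have [t_flat|t_area] := eqVneq (area t) 0.
  under eq_bigr => k _ do rewrite J_sum_sqdist area_child t_flat mul0r eqxx.
  by rewrite sumr_const card_ord natmul_enatmul enatmul_pinfty gt0_muley ?lte_fin.
have child_area k : area (child k t) != 0.
  by rewrite area_child mulf_neq0 // invr_eq0 pnatr_eq0.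
under eq_bigr => k _ do rewrite J_sum_sqdist (negbTE (child_area k)) area_child.
rewrite sumEFin -EFinM -mulr_suml sum_sqdist_child; congr EFin.
by field.
Qed.

End Subdivision.

Section Chain.
Variables (R : realType) (T0 : triangle R) (N : nat).

Lemma chainS (w : {ffun 'I_N -> 'I_6}) m (m_lt : (m < N)%N) :
  chain T0 w m.+1 = child (w (Ordinal m_lt)) (chain T0 w m).
Proof. by rewrite /= insubT. Qed.

Lemma eq_chain (w1 w2 : {ffun 'I_N -> 'I_6}) m :
  (m <= N)%N -> (forall i : 'I_N, (i < m)%N -> w1 i = w2 i) ->
  chain T0 w1 m = chain T0 w2 m.
Proof.
elim: m => [//|m IH] m_lt w12.
rewrite !(chainS _ m_lt) IH ?(ltnW m_lt) ?w12 // => i i_lt.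
by rewrite w12 // ltnW.
Qed.

End Chain.

Lemma enatmul_eq_mule (R : realType) (x y : \bar R) (m n : nat) :
  (0 < m)%N -> (0 < n)%N -> (x *+ m = y *+ n)%E ->
  ((n%:R^-1)%:E * x = (m%:R^-1)%:E * y)%E.
Proof.
move=> m_gt0 n_gt0 xy.
have nat_neq0 (k : nat) : (0 < k)%N -> k%:R != 0 :> R by rewrite pnatr_eq0 -lt0n.
have scale_natK (k : nat) (z : \bar R) : (0 < k)%N ->
    ((k%:R^-1)%:E * (z *+ k) = z)%E.
  by move=> k_gt0; rewrite -mule_natl muleA -EFinM mulVf ?nat_neq0 ?mul1e.
rewrite -[x](scale_natK m) // xy muleA -EFinM mulrC EFinM -muleA.
by rewrite scale_natK.
Qed.

Theorem lemma5 (R : realType) (T0 : triangle R) (hT0 : not_all_equal T0)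
  (n : nat) (w : {ffun 'I_n.+1 -> 'I_6}) :
  condexp (fun w' => J (chain T0 w' n.+1))
          (fun w' => [seq chain T0 w' m | m <- iota 0 n.+1]) w
  = ((4 / 3 : R)%:E * J (chain T0 w n))%E.
Proof.
set Y := fun w' => [seq chain T0 w' m | m <- iota 0 n.+1].
rewrite /condexp; set P := fun w' => Y w' == Y w.
set t := chain T0 w n.
have past_last w' : P w' -> chain T0 w' n = t.
  move=> /eqP Yw'; have := congr1 (fun s => nth t s n) Yw'.
  by rewrite !(nth_map 0%N) ?size_iota // nth_iota.
have P_shift k w' : P (shift_at ord_max k w') = P w'.
  congr (_ == _); apply/eq_in_map => m; rewrite mem_iota add0n => m_lt.
  apply: eq_chain => [|i i_lt]; first exact: ltnW.
  by rewrite ffunE; case: eqP => // i_max; move: i_lt m_lt; rewrite i_max /=; lia.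
have sum_last : (\sum_(w' | P w') J (chain T0 w' n.+1) =
                 \sum_(w' | P w') J (child (w' ord_max) t))%E.
  by apply: eq_bigr => w' /past_last <-; rewrite (chainS _ _ (ltnSn n)).
have level_gt0 : (0 < #|P|)%N by apply/card_gt0P; exists w; exact: eqxx.
have := sum_shift_invariant (fun k => J (child k t)) P_shift.
rewrite sum_J_child card_ord !natmul_enatmul => /(enatmul_eq_mule _ level_gt0).
rewrite cardsE sum_last => -> //.
by rewrite muleA -EFinM; congr (_%:E * _)%E; field.
Qed.
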